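(* Let $(\Phi,D)$ be a domain-free continuous information algebra and $(\Psi,D)$ its associated labeled information algebra. Let $x\in D$ and $\psi,\phi\in\Phi$ with $\psi=\psi^{\Rightarrow x}$ and $\phi=\phi^{\Rightarrow x}$. Then $\psi\ll\phi$ implies $(\psi,x)\ll_x(\phi,x)$. Furthermore, if $(\Phi,D)$ is s-continuous, then $\psi\ll\phi$ if and only if $(\psi,x)\ll_x(\phi,x)$.
   Context: A domain-free information algebra $(\Phi,D)$ consists of a set $\Phi$, a lattice $D$, a combination $\otimes$ and a focusing $(\psi,x)\mapsto\psi^{\Rightarrow x}$ ($x\in D$) such that: $\otimes$ is associative, commutative with neutral element $e$; $(\psi^{\Rightarrow y})^{\Rightarrow x}=\psi^{\Rightarrow x\wedge y}$; $(\phi^{\Rightarrow x}\otimes\psi)^{\Rightarrow x}=\phi^{\Rightarrow x}\otimes\psi^{\Rightarrow x}$; every $\psi$ has some $x$ with $\psi^{\Rightarrow x}=\psi$; $\psi\otimes\psi^{\Rightarrow x}=\psi$. Order: $\psi\le\phi$ iff $\psi\otimes\phi=\phi$ (same definition in the labeled algebra below); suprema refer to this order. $a\ll b$ means: for every directed $X$ with $b\le\vee X$ there is $c\in X$ with $a\le c$. $(\Phi,D)$, with $D$ having a top element, is continuous (resp. s-continuous) if there exists $\Gamma\subseteq\Phi$, closed under combination and containing $e$, such that every directed subset of $\Gamma$ has a supremum in $\Phi$ and $\phi=\vee\{\psi\in\Gamma:\psi\ll\phi\}$ for all $\phi$ (resp. $\phi^{\Rightarrow x}=\vee\{\psi\in\Gamma:\psi=\psi^{\Rightarrow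 x}\ll\phi\}$ for all $\phi,x$). The associated labeled information algebra $(\Psi,D)$ has $\Psi=\{(\phi,x)\in\Phi\times D:\phi=\phi^{\Rightarrow x}\}$, labeling $d(\phi,x)=x$, combination $(\phi,x)\otimes(\psi,y)=(\phi\otimes\psi,x\vee y)$ and marginalization $(\phi,x)^{\downarrow y}=(\phi^{\Rightarrow y},y)$ for $y\le x$. $\Psi_x=\{(\phi,x)\in\Psi\}$, and $\ll_x$ is the way-below relation in the poset $(\Psi_x,\le)$. *)

From HB Require Import structures.
From mathcomp Require Import all_boot all_order.
Set Implicit Arguments. Unset Strict Implicit. Unset Printing Implicit Defensive.
Import Order.TTheory.
Local Open Scope order_scope.

(* Generic order-theoretic notions for a relation [le] on a type [T],
   restricted to a carrier [S : T -> Prop] (the poset (S, le)). *)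
Section Generic.
Variables (T : Type) (S : T -> Prop) (le : T -> T -> Prop).

Definition directed (X : T -> Prop) : Prop :=
  (exists y, X y) /\
  forall a b, X a -> X b -> exists c, X c /\ le a c /\ le b c.

Definition upper_in (X : T -> Prop) (u : T) : Prop :=
  S u /\ forall y, X y -> le y u.

Definition is_sup_in (X : T -> Prop) (s : T) : Prop :=
  upper_in X s /\ forall u, upper_in X u -> le s u.

Definition way_below_in (a b : T) : Prop :=
  forall X : T -> Prop, (forall y, X y -> S y) -> directed X ->
  forall s, is_sup_in X s -> le b s -> exists c, X c /\ le a c.
End Generic.

Section InfAlg.
Variables (disp : Order.disp_t) (D : latticeType disp) (Phi : Type).
Variables (comb : Phi -> Phi -> Phi) (e : Phi) (foc : Phi -> D -> Phi).

Definition df_infalg : Prop :=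
  (forall a b c, comb a (comb b c) = comb (comb a b) c) /\
      (forall a b, comb a b = comb b a) /\
      (forall a, comb e a = a) /\
      (forall psi x y, foc (foc psi y) x = foc psi (x `&` y)) /\
      (forall phi psi x, foc (comb (foc phi x) psi) x = comb (foc phi x) (foc psi x)) /\
      (forall psi, exists x, foc psi x = psi) /\
      (forall psi x, comb psi (foc psi x) = psi).

Definition ile (a b : Phi) : Prop := comb a b = b.

Definition allPhi : Phi -> Prop := fun _ => True.

Definition way_below (a b : Phi) : Prop := way_below_in allPhi ile a b.

Definition comb_closed (G : Phi -> Prop) : Prop :=
  (forall a b, G a -> G b -> G (comb a b)) /\ G e.

Definition dir_sups (G : Phi -> Prop) : Prop :=
  forall X : Phi -> Prop, (forall y, X y -> G y) -> directed ile X ->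
  exists s, is_sup_in allPhi ile X s.

Definition continuous : Prop :=
  exists G : Phi -> Prop, comb_closed G /\ dir_sups G /\
    forall phi, is_sup_in allPhi ile (fun psi => G psi /\ way_below psi phi) phi.

Definition s_continuous : Prop :=
  exists G : Phi -> Prop, comb_closed G /\ dir_sups G /\
    forall phi x, is_sup_in allPhi ile
      (fun psi => G psi /\ psi = foc psi x /\ way_below psi phi) (foc phi x).

Definition Psi (p : Phi * D) : Prop := p.1 = foc p.1 p.2.
Definition lcomb (p q : Phi * D) : Phi * D := (comb p.1 q.1, p.2 `|` q.2).
Definition lle (p q : Phi * D) : Prop := lcomb p q = q.
Definition Psi_at (x : D) (p : Phi * D) : Prop := Psi p /\ p.2 = x.
Definition lway_below_at (x : D) (p q : Phi * D) : Prop :=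
  way_below_in (Psi_at x) lle p q.
End InfAlg.

(* Both directions go through the basis G.  Given a directed X in Psi_x, the
   basis elements way below some member of X form a directed set whose
   supremum t dominates X, so (t^x, x) bounds X and phi <= t; psi << phi then
   puts psi below a basis element way below a member of X.  Conversely, given
   a directed Z in Phi with supremum s, the x-focused basis elements way below
   members of Z are directed with supremum t, (t^x, x) is the supremum of
   their labelled copies in Psi_x, and s-continuity gives phi <= s^x <= t. *)
From Pilot Require Import Defs.
From mathcomp Require Import all_boot all_order.
Set Implicit Arguments.
Import Order.TTheory.

Section InformationAlgebra.
Variables (disp : Order.disp_t) (D : latticeType disp) (Phi : Type)
  (comb : Phi -> Phi -> Phi) (e : Phi) (foc : Phi -> D -> Phi).
Hypothesis HA : df_infalg comb e foc.

Local Notation ile := (ile comb).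
Local Notation lle := (lle comb).
Local Notation wb := (way_below comb).

Lemma combA a b c : comb a (comb b c) = comb (comb a b) c.
Proof. by case: HA. Qed.

Lemma combC a b : comb a b = comb b a.
Proof. by case: HA => _ []. Qed.

Lemma comb_focus a x : comb a (foc a x) = a.
Proof. by case: HA => _ [_ [_ [_ [_ []]]]]. Qed.

Lemma focus_comb a b x : foc (comb (foc a x) b) x = comb (foc a x) (foc b x).
Proof. by case: HA => _ [_ [_ [_ []]]]. Qed.

Lemma focus_idem a x : foc (foc a x) x = foc a x.
Proof. by case: HA => _ [_ [_ [-> _]]]; rewrite meetxx. Qed.

Lemma combxx a : comb a a = a.
Proof.
case: HA => _ [_ [_ [_ [_ [supp _]]]]].
by have [x ax] := supp a; rewrite -{2}ax comb_focus.
Qed.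

Lemma ile_refl a : ile a a.
Proof. exact: combxx. Qed.

Lemma ile_trans {a b c} : ile a b -> ile b c -> ile a c.
Proof. by rewrite /Defs.ile => ab <-; rewrite combA ab. Qed.

Lemma ile_anti a b : ile a b -> ile b a -> a = b.
Proof. by rewrite /Defs.ile => ab ba; rewrite -ab combC ba. Qed.

Lemma ile_combl a b : ile a (comb a b).
Proof. by rewrite /Defs.ile combA combxx. Qed.

Lemma ile_combr a b : ile b (comb a b).
Proof. by rewrite combC; apply: ile_combl. Qed.

Lemma ile_comb a b c : ile a c -> ile b c -> ile (comb a b) c.
Proof. by rewrite /Defs.ile => ac bc; rewrite -combA bc ac. Qed.

Lemma ile_e a : ile e a.
Proof. by case: HA => _ [_ [combeL _]]; apply: combeL. Qed.

Lemma focus_ile a x : ile (foc a x) a.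
Proof. by rewrite /Defs.ile combC comb_focus. Qed.

Lemma focus_mono x {a b} : ile a b -> ile (foc a x) (foc b x).
Proof.
move=> ab; have ax_b : ile (foc a x) b := ile_trans (focus_ile a x) ab.
by rewrite /Defs.ile -focus_comb ax_b.
Qed.

Lemma focus_e x : foc e x = e.
Proof. exact: ile_anti (focus_ile e x) (ile_e _). Qed.

Lemma comb_closed_focused {G : Phi -> Prop} x :
  comb_closed comb e G -> comb_closed comb e (fun g => G g /\ g = foc g x).
Proof.
case=> Gcomb Ge; split; last by rewrite focus_e.
move=> a b [Ga ax] [Gb bx]; split; first exact: Gcomb.
by rewrite {2}ax focus_comb -ax -bx.
Qed.

Lemma way_below_ile {a b} : wb a b -> ile a b.
Proof.
move=> ab; have b_dir : directed ile (eq^~ b).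
  by split=> [|_ _ -> ->]; [exists b | exists b; split=> //; split; apply: ile_refl].
have b_sup : is_sup_in (allPhi (Phi:=Phi)) ile (eq^~ b) b.
  by split=> [|u [_]]; [split=> // _ ->; apply: ile_refl | apply].
by have [_ [-> ]] := ab _ (fun _ _ => I) b_dir b b_sup (ile_refl b).
Qed.

Lemma way_below_ile_trans {a b c} : wb a b -> ile b c -> wb a c.
Proof. by move=> ab bc X XS Xdir s Xs cs; apply: ab; last exact: ile_trans bc cs. Qed.

Lemma way_below_e b : wb e b.
Proof. by move=> X _ [[y Xy] _] _ _ _; exists y; split; last apply: ile_e. Qed.

Lemma way_below_comb a b c : wb a c -> wb b c -> wb (comb a b) c.
Proof.
move=> ac bc X XS Xdir s Xs cs.
have [c1 [Xc1 ac1]] := ac X XS Xdir s Xs cs.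
have [c2 [Xc2 bc2]] := bc X XS Xdir s Xs cs.
have [c3 [Xc3 [c13 c23]]] := Xdir.2 c1 c2 Xc1 Xc2.
exists c3; split=> //; apply: ile_comb.
- exact: ile_trans ac1 c13.
- exact: ile_trans bc2 c23.
Qed.

Definition approx_below (G Z : Phi -> Prop) (g : Phi) : Prop :=
  G g /\ exists z, Z z /\ wb g z.

Lemma directed_approx_below {G Z : Phi -> Prop} :
  comb_closed comb e G -> directed ile Z -> directed ile (approx_below G Z).
Proof.
case=> Gcomb Ge [[z0 Zz0] Zdir]; split.
  by exists e; split=> //; exists z0; split=> //; apply: way_below_e.
move=> a b [Ga [za [Zza aza]]] [Gb [zb [Zzb bzb]]].
have [z [Zz [zaz zbz]]] := Zdir za zb Zza Zzb.
exists (comb a b); split; last by split; [apply: ile_combl | apply: ile_combr].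
split; first exact: Gcomb.
exists z; split=> //; apply: way_below_comb.
- exact: way_below_ile_trans aza zaz.
- exact: way_below_ile_trans bzb zbz.
Qed.

Lemma lle_label (x : D) a b : lle (a, x) (b, x) <-> ile a b.
Proof. by rewrite /Defs.lle /lcomb /= joinxx; split=> [[]|->]. Qed.

Lemma Psi_at_label {x p} : Psi_at foc x p -> p = (p.1, x).
Proof. by case: p => a y [_ /= ->]. Qed.

Definition labelled (x : D) (Y : Phi -> Prop) (p : Phi * D) : Prop :=
  Y p.1 /\ p.2 = x.

Lemma labelled_Psi_at {x} {Y : Phi -> Prop} :
  (forall a, Y a -> a = foc a x) -> forall p, labelled x Y p -> Psi_at foc x p.
Proof. by move=> Yx [a y] [/= Ya ->]; split=> //; apply: Yx. Qed.

Lemma directed_labelled x {Y : Phi -> Prop} :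
  directed ile Y -> directed lle (labelled x Y).
Proof.
case=> [[a0 Ya0] Ydir]; split; first by exists (a0, x).
move=> [a y] [b z] [/= Ya ->] [/= Yb ->].
have [c [Yc [ac bc]]] := Ydir a b Ya Yb.
by exists (c, x); split; [split | split; apply/lle_label].
Qed.

Lemma directed_slice {x} {X : Phi * D -> Prop} :
  (forall p, X p -> Psi_at foc x p) -> directed lle X ->
  directed ile (fun a => X (a, x)).
Proof.
move=> XPsi [[p Xp] Xdir]; split.
  by exists p.1; rewrite -(Psi_at_label (XPsi p Xp)).
move=> a b Xa Xb; have [c [Xc [ac bc]]] := Xdir _ _ Xa Xb.
have cx := Psi_at_label (XPsi c Xc); rewrite cx in Xc ac bc.
by exists c.1; split=> //; split; apply/(lle_label x).
Qed.

Lemma upper_labelled {x} {X : Phi * D -> Prop} {t} :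
  (forall p, X p -> Psi_at foc x p) -> (forall a, X (a, x) -> ile a t) ->
  upper_in (Psi_at foc x) lle X (foc t x, x).
Proof.
move=> XPsi Xt; split; first by split=> //; rewrite /Psi /= focus_idem.
move=> [a y] Xay; case: (XPsi _ Xay); rewrite /Psi /= => ax yx; subst y.
by apply/lle_label; rewrite ax; apply/focus_mono/Xt.
Qed.

Lemma sup_labelled {x} {Y : Phi -> Prop} {t} :
  (forall a, Y a -> a = foc a x) -> is_sup_in (allPhi (Phi:=Phi)) ile Y t ->
  is_sup_in (Psi_at foc x) lle (labelled x Y) (foc t x, x).
Proof.
move=> Yx [[_ Yt] t_least].
split; first by apply: upper_labelled; [apply: labelled_Psi_at | move=> a [/Yt]].
move=> [u y] [Pu Yu]; case: Pu; rewrite /Psi /= => ux yx; subst y.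
apply/lle_label; rewrite ux; apply/focus_mono/t_least; split=> // a Ya.
by apply/(lle_label x)/Yu.
Qed.

Lemma way_below_labelled x psi phi :
  continuous comb e -> wb psi phi -> lway_below_at comb foc x (psi, x) (phi, x).
Proof.
move=> [G [Gcl [Gsup Gapprox]]] psi_phi X XPsi Xdir s Xs phi_s.
pose Y := approx_below G (fun a => X (a, x)).
have Ydir : directed ile Y := directed_approx_below Gcl (directed_slice XPsi Xdir).
have [t Yts] := Gsup Y (fun g Yg => Yg.1) Ydir.
have [[_ Yt] _] := Yts.
have Xt : forall a, X (a, x) -> ile a t.
  move=> a Xa; apply: (Gapprox a).2; split=> // g [Gg ga].
  by apply: Yt; split=> //; exists a.
have := Xs.2 _ (upper_labelled XPsi Xt).
rewrite (Psi_at_label Xs.1.1) in phi_s * => /lle_label s_t.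
move/lle_label: phi_s => phi_s.
have phi_t : ile phi t.
  exact: ile_trans phi_s (ile_trans s_t (focus_ile t x)).
have [g [[_ [a [Xa ga]]] psi_g]] := psi_phi Y (fun _ _ => I) Ydir t Yts phi_t.
exists (a, x); split=> //; apply/lle_label.
exact: ile_trans psi_g (way_below_ile ga).
Qed.

Lemma labelled_way_below x psi phi :
  s_continuous comb e foc -> phi = foc phi x ->
  lway_below_at comb foc x (psi, x) (phi, x) -> wb psi phi.
Proof.
move=> [G [Gcl [Gsup Gapprox]]] phix psi_phi Z _ Zdir s Zs phi_s.
pose Y := approx_below (fun g => G g /\ g = foc g x) Z.
have Ydir : directed ile Y := directed_approx_below (comb_closed_focused x Gcl) Zdir.
have Yx : forall g, Y g -> g = foc g x by move=> g [[]].
have [t Yts] := Gsup Y (fun g Yg => Yg.1.1) Ydir.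
have [[_ Yt] _] := Yts.
have Zt : forall c, Z c -> ile (foc c x) t.
  move=> c Zc; apply: (Gapprox c x).2; split=> // g [Gg [gx gc]].
  by apply: Yt; split=> //; exists c.
have sx_t : ile (foc s x) t.
  apply: (Gapprox s x).2; split=> // g [_ [gx gs]].
  have [c [Zc gc]] := gs Z (fun _ _ => I) Zdir s Zs (ile_refl s).
  by rewrite gx; exact: ile_trans (focus_mono x gc) (Zt c Zc).
have phi_t : lle (phi, x) (foc t x, x).
  apply/lle_label; rewrite phix; apply: focus_mono.
  by rewrite phix; exact: ile_trans (focus_mono x phi_s) sx_t.
have [[a y] [[Ya /= ->] /lle_label psi_a]] :=
  psi_phi _ (labelled_Psi_at Yx) (directed_labelled x Ydir) _ (sup_labelled Yx Yts) phi_t.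
have [_ [z [Zz az]]] := Ya.
exists z; split=> //.
exact: ile_trans psi_a (way_below_ile az).
Qed.

End InformationAlgebra.

Theorem lemma4p6 (disp : Order.disp_t) (D : tLatticeType disp) (Phi : Type)
  (comb : Phi -> Phi -> Phi) (e : Phi) (foc : Phi -> D -> Phi)
  (HA : df_infalg comb e foc) (Hcont : continuous comb e)
  (x : D) (psi phi : Phi) (Hpsi : psi = foc psi x) (Hphi : phi = foc phi x) :
  (way_below comb psi phi -> lway_below_at comb foc x (psi, x) (phi, x)) /\
  (s_continuous comb e foc ->
     (way_below comb psi phi <-> lway_below_at comb foc x (psi, x) (phi, x))).
Proof.
have to_labelled := way_below_labelled HA Hcont (x:=x) (psi:=psi) (phi:=phi).
split=> // Hscont; split=> //.
exact: (labelled_way_below HA Hscont Hphi).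
Qed.
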